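(* Let $y_n$ denote the number of unlabelled rooted trees (Pólya trees) with $n$ vertices and $y(x)=\sum_{n\ge1}y_nx^n$. Then there is no formal power series $\phi(z)=\sum_{j\ge0}\phi_jz^j$ with non-negative coefficients $\phi_j\ge 0$ such that $y(x)=x\,\phi(y(x))$. In other words, Pólya trees are not simply generated.
   Context: A Pólya tree is an unlabelled rooted tree, i.e. rooted trees are counted up to root-preserving isomorphism. The generating function satisfies $y(x)=x\exp\left(\sum_{i\ge1}y(x^i)/i\right)$, and $y(x)=x+x^2+2x^3+4x^4+9x^5+\cdots$. A class of trees is called simply generated if its generating function $y(x)$ satisfies $y(x)=x\phi(y(x))$ for some power series $\phi$ with non-negative coefficients. *)

From Stdlib Require List.
From Stdlib Require Import Permutation.
From HB Require Import structures.
From mathcomp Require Import all_boot all_order all_algebra.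
Set Implicit Arguments. Unset Strict Implicit. Unset Printing Implicit Defensive.
Import Order.TTheory GRing.Theory Num.Theory.

Inductive rtree : Type := Node of seq rtree.

Fixpoint tsize (t : rtree) : nat :=
  let: Node l := t in (sumn (map tsize l)).+1.

(* Root-preserving isomorphism of rooted trees: the children lists match
   up to a permutation, with corresponding subtrees isomorphic. *)
Inductive tiso : rtree -> rtree -> Prop :=
| tiso_node (l1 l2 l : seq rtree) :
    Permutation l2 l -> List.Forall2 tiso l1 l -> tiso (Node l1) (Node l2).

(* [polya_count n k]: there are exactly k unlabelled rooted trees (Polya
   trees) with n vertices, i.e. k isomorphism classes of rooted trees of
   size n: a list of k pairwise non-isomorphic trees of size n such that
   every tree of size n is isomorphic to one of them. *)
Definition polya_count (n k : nat) : Prop :=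
  exists s : seq rtree,
    [/\ size s = k,
        (forall i, i < k -> tsize (nth (Node [::]) s i) = n),
        (forall i j, i < k -> j < k -> i <> j ->
            ~ tiso (nth (Node [::]) s i) (nth (Node [::]) s j)) &
        (forall t, tsize t = n -> exists2 i, i < k & tiso t (nth (Node [::]) s i))].

Local Open Scope ring_scope.

Definition trunc_ps (R : nzRingType) (y : nat -> nat) (N : nat) : {poly R} :=
  \poly_(i < N.+1) (y i)%:R.

(* Coefficient of x^n in phi(y(x)), for y with y_0 = 0 (so that only the
   terms j <= n contribute): sum_{j <= n} phi_j [x^n] y(x)^j. *)
Definition comp_coef (R : nzRingType) (phi : nat -> R) (y : nat -> nat) (n : nat) : R :=
  \sum_(j < n.+1) phi j * ((trunc_ps R y n) ^+ j)`_n.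

From Pilot Require Import Defs.
From HB Require Import structures.
From mathcomp Require Import all_boot all_order all_algebra.
From mathcomp Require Import zify lra.
From Stdlib Require Import Permutation.
Import Order.TTheory GRing.Theory Num.Theory.

(* Comparing coefficients in y = x phi(y) with y = x + x^2 + 2x^3 + 4x^4 + 9x^5
   + 20x^6 + ... gives phi_1 = 1 from x^2 and phi_2 = 1 from x^3; with
   phi_j >= 0 the coefficient of x^6 then gives
   20 >= phi_1 y_5 + phi_2 [x^5] y^2 = 9 + 12, a contradiction.
   The values y_1, ..., y_6 are computed: a canonical representative of the
   isomorphism class of a tree is obtained by recursively sorting children
   (by the lexicographic order of preorder degree sequences), and the
   canonical forms of an exhaustive list of trees of size n are counted. *)

Set Implicit Arguments.
Unset Strict Implicit.
Unset Printing Implicit Defensive.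

Lemma PermutationP (T : eqType) (s t : seq T) :
  reflect (Permutation s t) (perm_eq s t).
Proof.
apply: (iffP idP); last first.
  elim=> [|x l l' _|x x' l|l l' l'' _ pl _ pl'] //.
  - by rewrite perm_cons.
  - by apply/permP => p /=; rewrite addnCA.
  - exact: seq.perm_trans pl pl'.
elim: s t => [|x s IH] t; first by rewrite perm_sym => /perm_nilP ->.
move=> pst; have x_in: x \in t by rewrite -(perm_mem pst) mem_head.
case/splitPr: x_in pst => t1 t2 pst.
apply/Permutation_cons_app/IH.
by rewrite -(perm_cons x) (seq.perm_trans pst) // perm_sym -cat1s perm_catCA.
Qed.

Lemma perm_map_Forall2 (T V : eqType) (f : T -> V) (R : T -> T -> Prop)
    (l1 l2 : seq T) :
  (forall t, List.In t l1 -> forall u, f t = f u -> R t u) ->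
  perm_eq (map f l1) (map f l2) -> exists2 l, Permutation l2 l & List.Forall2 R l1 l.
Proof.
elim: l1 l2 => [|t l1 IH] l2 fR perm12.
  by exists [::]; move: (perm_size perm12); rewrite size_map; case: l2 {perm12}.
have: f t \in map f l2 by rewrite -(perm_mem perm12) mem_head.
case/mapP=> u u_in ftu; have perm_u := perm_to_rem u_in.
have perm12': perm_eq (map f l1) (map f (rem u l2)).
  rewrite -(perm_cons (f t)) ftu.
  by have := seq.perm_trans perm12 (perm_map f perm_u); rewrite /= ftu.
have [l perm_l Rl] := IH _ (fun t' t'_in => fR t' (or_intror t'_in)) perm12'.
exists (u :: l); last by constructor => //; apply: fR; [left|].
by apply: Permutation_trans (Permutation.perm_skip u perm_l); apply/PermutationP.
Qed.

Definition rtree_ind_In (P : rtree -> Prop)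
    (IH : forall l, (forall t, List.In t l -> P t) -> P (Node l)) :
  forall t, P t :=
  fix ind t := let: Node l := t in IH l
    ((fix ind_list l : forall t, List.In t l -> P t :=
      if l is a :: l' then fun t t_in =>
        match t_in with
        | or_introl e => eq_ind a P (ind a) t e
        | or_intror t_in' => ind_list l' t t_in'
        end
      else fun t (F : False) => False_ind _ F) l).

Fixpoint tcode (t : rtree) : seq nat :=
  let: Node l := t in size l :: flatten (map tcode l).

Lemma tcode_cat_inj t1 t2 r1 r2 :
  tcode t1 ++ r1 = tcode t2 ++ r2 -> t1 = t2 /\ r1 = r2.
Proof.
elim/rtree_ind_In: t1 t2 r1 r2 => l1 IH [l2] r1 r2 /= [size_l12].
suff flatten_inj: forall r1 r2, size l1 = size l2 ->
    flatten (map tcode l1) ++ r1 = flatten (map tcode l2) ++ r2 ->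
  l1 = l2 /\ r1 = r2.
  by move/(flatten_inj _ _ size_l12) => [-> ->].
elim: l1 l2 IH {size_l12} => [|a l1 IHl] [|b l2] IH {}r1 {}r2 //= [size_l12].
rewrite -!catA => /IH [|-> /IHl [t t_in|//|-> ->//]]; first by left.
by apply: IH; right.
Qed.

Lemma tcode_inj : injective tcode.
Proof.
by move=> t1 t2 e; case: (@tcode_cat_inj t1 t2 [::] [::]); rewrite ?cats0.
Qed.

HB.instance Definition _ := Equality.copy rtree (inj_type tcode_inj).

Definition tle (t u : rtree) := (tcode t <= tcode u :> seqlexi nat)%O.

Lemma tle_total : total tle. Proof. by move=> t u; apply: le_total. Qed.
Lemma tle_trans : transitive tle. Proof. by move=> t u v; apply: le_trans. Qed.
Lemma tle_anti : antisymmetric tle.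
Proof. by move=> t u /le_anti/tcode_inj. Qed.

Fixpoint canon (t : rtree) : rtree :=
  let: Node l := t in Node (sort tle (map canon l)).

Lemma tiso_canon t u : tiso t u -> canon t = canon u.
Proof.
elim/rtree_ind_In: t u => l1 IH u tiso_tu.
inversion tiso_tu as [? l2 l perm_l2l iso_l1l]; subst => /=; congr Node.
have ->: map canon l1 = map canon l.
  elim: iso_l1l IH => //= t v l1' l' iso_tv _ IHl IH.
  by rewrite (IH t (or_introl erefl) v iso_tv) IHl // => w w_in; apply: IH; right.
apply/perm_sortP; [exact: tle_total|exact: tle_trans|exact: tle_anti|].
by rewrite perm_sym; apply/PermutationP/Permutation_map.
Qed.

Lemma canon_tiso t u : canon t = canon u -> tiso t u.
Proof.
elim/rtree_ind_In: t u => l1 IH [l2] /= [] /perm_sortP.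
move=> /(_ tle_total tle_trans tle_anti) /(perm_map_Forall2 IH) [l perm_l2l iso_l1l].
exact: tiso_node perm_l2l iso_l1l.
Qed.

Fixpoint forests (fuel m : nat) : seq (seq rtree) :=
  if fuel is fuel'.+1 then
    if m is 0 then [:: [::]] else
    flatten [seq [seq Node c :: r | c <- forests fuel' k.-1, r <- forests fuel' (m - k)]
            | k <- iota 1 m]
  else [::].

(* [tsize] alone would denote the size of a tuple, hence [Defs.tsize]. *)
Lemma mem_forests fuel l :
  sumn (map Defs.tsize l) < fuel -> l \in forests fuel (sumn (map Defs.tsize l)).
Proof.
elim: fuel l => [|fuel IH] [|[c] l] //.
rewrite [sumn _]/= addSn ltnS => size_lt; apply/flatten_mapP.
exists (sumn (map Defs.tsize c)).+1; first by rewrite mem_iota; lia.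
apply/allpairsP; exists (c, l); split => //; first by apply: IH => /=; lia.
by rewrite subSS addKn; apply: IH => /=; lia.
Qed.

Definition polya_classes (n : nat) : seq rtree :=
  undup [seq canon t | t <- [seq Node c | c <- forests n n.-1] & Defs.tsize t == n].

Lemma mem_polya_classes t : canon t \in polya_classes (Defs.tsize t).
Proof.
rewrite mem_undup; apply: map_f; rewrite mem_filter eqxx /=.
by case: t => c; apply/map_f/mem_forests.
Qed.

Lemma polya_classesP n c :
  c \in polya_classes n -> exists2 t, Defs.tsize t = n & c = canon t.
Proof.
by rewrite mem_undup => /mapP [t]; rewrite mem_filter => /andP[/eqP <- _] ->; exists t.
Qed.

Lemma polya_count_size n k : polya_count n k -> k = size (polya_classes n).
Proof.
case=> s [<- size_s noniso_s cover_s].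
have uniq_canon_s: uniq (map canon s).
  apply/(uniqP (canon (Node [::]))) => i j; rewrite !inE size_map => i_lt j_lt.
  rewrite !(nth_map (Node [::])) //; case: (i =P j) => // i_ne_j.
  by move/canon_tiso/(noniso_s i j i_lt j_lt i_ne_j).
suff /perm_size: perm_eq (map canon s) (polya_classes n) by rewrite size_map.
apply: uniq_perm; rewrite ?undup_uniq // => c; apply/idP/idP.
  case/mapP=> _ /(nthP (Node [::])) [i i_lt <-] ->.
  by rewrite -(size_s i i_lt) mem_polya_classes.
case/polya_classesP=> t size_t ->; have [i i_lt /tiso_canon ->] := cover_s t size_t.
exact/map_f/mem_nth.
Qed.

Lemma polya_classes_size :
  [seq size (polya_classes n) | n <- iota 0 7] = [:: 0; 1; 1; 2; 4; 9; 20].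
Proof. by vm_compute. Qed.

Local Open Scope ring_scope.

Lemma coef_expr_ge0 (R : numDomainType) (p : {poly R}) :
  (forall i, 0 <= p`_i) -> forall j i, 0 <= (p ^+ j)`_i.
Proof.
move=> p_ge0; elim=> [|j IH] i; first by rewrite expr0 coefC; case: eqP.
by rewrite exprS coefM; apply: sumr_ge0 => k _; apply: mulr_ge0.
Qed.

Lemma comp_coef_ge_head (R : realFieldType) (phi : nat -> R) (y : nat -> nat) n k :
    (forall j, 0 <= phi j) -> (k <= n.+1)%N ->
  \sum_(j < k) phi j * ((trunc_ps R y n) ^+ j)`_n <= comp_coef phi y n.
Proof.
move=> phi_ge0 le_k.
rewrite (big_ord_widen n.+1 (fun j => phi j * ((trunc_ps R y n) ^+ j)`_n) le_k).
rewrite big_mkcond /comp_coef.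
apply: ler_sum => j _; case: ifP => // _; apply: mulr_ge0 => //.
by apply: coef_expr_ge0 => i; rewrite coef_poly; case: ifP.
Qed.

Lemma polya_prefix_not_simply_generated
    (R : realFieldType) (phi : nat -> R) (y : nat -> nat) :
    (forall j, 0 <= phi j) ->
    [seq y n | n <- iota 0 7] = [:: 0; 1; 1; 2; 4; 9; 20]%N ->
  ~ (forall n : nat, (y n.+1)%:R = comp_coef phi y n).
Proof.
move=> phi_ge0 [y0 y1 y2 y3 y4 y5 y6] y_eq.
have := comp_coef_ge_head y phi_ge0 (isT : 3 <= 6)%N; rewrite -y_eq.
have := y_eq 1%N; have := y_eq 2%N.
rewrite /comp_coef /trunc_ps !big_ord_recr big_ord0 /= !expr0 !expr1 !expr2.
rewrite !coefC !coefM !big_ord_recr !big_ord0 /= !coef_poly /=.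
rewrite y0 y1 y2 y3 y4 y5 y6.
lra.
Qed.

Theorem mainTheorem1 (y : nat -> nat) (hy : forall n, polya_count n (y n))
  (R : realFieldType) (phi : nat -> R) (hphi : forall j, 0 <= phi j) :
  ~ (forall n : nat, (y n.+1)%:R = comp_coef phi y n).
Proof.
apply: polya_prefix_not_simply_generated hphi _.
have yE n : y n = size (polya_classes n) := polya_count_size (hy n).
by rewrite (eq_map yE) polya_classes_size.
Qed.
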